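(* Let $R$ be a commutative Noetherian ring, $M$ a finitely generated $R$-module, $S$ a subset of $M$, and $F \subseteq \langle S \rangle$ a free $R$-module of rank $i$ such that $M = F \oplus M'$ for some submodule $M' \subseteq M$. Let $S'$ be the projection of $S$ to $M'$ along this internal direct sum. Then for all $\mathfrak{p} \in \mathrm{Spec}(R)$, $\delta_\mathfrak{p}(S',M') = \delta_\mathfrak{p}(S,M) - i$.
   Context: $\langle S\rangle$ denotes the $R$-submodule generated by $S$. For a prime $\mathfrak{p}$, $\delta_\mathfrak{p}(S,M)$ is the largest integer $n \ge 0$ such that there is a free $R_\mathfrak{p}$-submodule $G \subseteq \langle S\rangle_\mathfrak{p}$ of rank $n$ which is a direct summand of $M_\mathfrak{p}$. *)

From HB Require Import structures.
From mathcomp Require Import all_boot all_order all_algebra.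
Set Implicit Arguments. Unset Strict Implicit. Unset Printing Implicit Defensive.
Import Order.TTheory GRing.Theory Num.Theory.
Local Open Scope ring_scope.

Definition ideal (R : comPzRingType) (I : R -> Prop) : Prop :=
  I 0 /\ (forall a b, I a -> I b -> I (a + b)) /\ (forall r a, I a -> I (r * a)).

Definition prime_ideal (R : comPzRingType) (p : R -> Prop) : Prop :=
  ideal p /\ ~ p 1 /\ (forall a b, p (a * b) -> p a \/ p b).

Definition noetherian (R : comPzRingType) : Prop :=
  forall I : R -> Prop, ideal I ->
    exists n (g : 'I_n -> R),
      forall a, I a <-> exists r : 'I_n -> R, a = \sum_(k < n) r k * g k.

Section Modules.
Variables (K : pzRingType) (V : lmodType K).

Definition submod (P : V -> Prop) : Prop :=
  P 0 /\ (forall x y, P x -> P y -> P (x + y)) /\ (forall (r : K) x, P x -> P (r *: x)).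

Definition gen_sub (S : V -> Prop) : V -> Prop :=
  fun v => exists n (r : 'I_n -> K) (x : 'I_n -> V),
    (forall k, S (x k)) /\ v = \sum_(k < n) r k *: x k.

Definition fin_gen : Prop :=
  exists n (x : 'I_n -> V), forall v, gen_sub (fun y => exists k, y = x k) v.

Definition lin_indep n (b : 'I_n -> V) : Prop :=
  forall r : 'I_n -> K, \sum_(k < n) r k *: b k = 0 -> forall k, r k = 0.

Definition free_of_rank (G : V -> Prop) (n : nat) : Prop :=
  submod G /\
  exists b : 'I_n -> V, (forall k, G (b k)) /\ lin_indep b /\
    (forall v, G v -> exists r : 'I_n -> K, v = \sum_(k < n) r k *: b k).

Definition internal_dsum (G H : V -> Prop) : Prop :=
  submod G /\ submod H /\ (forall v, G v -> H v -> v = 0) /\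
  (forall v, exists g h, G g /\ H h /\ v = g + h).

Definition direct_summand (G : V -> Prop) : Prop :=
  exists H : V -> Prop, internal_dsum G H.

(* the property whose largest n defines delta: there is a free submodule
   G of rank n contained in T which is a direct summand of V *)
Definition delta_prop (T : V -> Prop) (n : nat) : Prop :=
  exists G : V -> Prop, free_of_rank G n /\ (forall v, G v -> T v) /\ direct_summand G.

End Modules.

Definition is_max (P : nat -> Prop) (d : nat) : Prop :=
  P d /\ forall n, P n -> (n <= d)%N.

(* (Rp, phi) is the localization (t plays the role of (phi s)^-1) R_p of R at the prime p *)
Definition is_loc_ring (R : comPzRingType) (p : R -> Prop)
    (Rp : comPzRingType) (phi : {rmorphism R -> Rp}) : Prop :=
  (forall s, ~ p s -> exists t, phi s * t = 1) /\
  (forall z : Rp, exists a s t, ~ p s /\ phi s * t = 1 /\ z = phi a * t) /\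
  (forall a, phi a = 0 -> exists u, ~ p u /\ u * a = 0).

Definition is_loc_mod (R : comPzRingType) (p : R -> Prop)
    (Rp : comPzRingType) (phi : {rmorphism R -> Rp})
    (N : lmodType R) (Np : lmodType Rp) (iota : N -> Np) : Prop :=
  (forall x y, iota (x + y) = iota x + iota y) /\
  (forall (r : R) x, iota (r *: x) = phi r *: iota x) /\
  (forall z : Np, exists x s t, ~ p s /\ phi s * t = 1 /\ z = t *: iota x) /\
  (forall x, iota x = 0 -> exists u, ~ p u /\ u *: x = 0).

Definition loc_sub (R : comPzRingType) (p : R -> Prop)
    (Rp : comPzRingType) (phi : {rmorphism R -> Rp})
    (N : lmodType R) (Np : lmodType Rp) (iota : N -> Np) (T : N -> Prop) : Np -> Prop :=
  fun z => exists x s t, T x /\ ~ p s /\ phi s * t = 1 /\ z = t *: iota x.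

(* A free direct summand of rank n contained in T amounts to n vectors of T
   together with n linear forms dual to them (a dual system), so delta_p is the
   largest size of a dual system in <S>_p.  Localizing M = F (+) M' gives
   M_p = F_p (+) M'_p, where F_p is free on the images e_k of a basis of F,
   which lie in <S>_p; the projection M_p -> M'_p and the inclusion
   M'_p -> M_p map <S>_p into <S'>_p and back.  Hence a dual system of size n
   in <S'>_p extends by the e_k and their coordinate forms to one of size
   n + i in <S>_p.  Conversely, over the local ring R_p an exchange argument
   turns a dual system of size n in <S>_p into one of size n - i inside the
   kernels of the coordinate forms, and its projection is a dual system in
   <S'>_p.  Sizes are bounded because M_p is finitely generated over the
   nonzero ring R_p. *)

From HB Require Import structures.
From mathcomp Require Import all_boot all_order all_algebra.
From mathcomp Require Import ring zify.
From Stdlib Require Import Classical ClassicalEpsilon.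
Import GRing.Theory.
Local Open Scope ring_scope.
Set Implicit Arguments. Unset Strict Implicit.
Local Arguments choice {A B R}.

Definition cat_ord (T : Type) m n (f : 'I_m -> T) (g : 'I_n -> T) (k : 'I_(m + n)) : T :=
  match split k with inl a => f a | inr b => g b end.

Lemma cat_ord_lshift (T : Type) m n (f : 'I_m -> T) (g : 'I_n -> T) a :
  cat_ord f g (lshift n a) = f a.
Proof. by rewrite /cat_ord (unsplitK (inl _ a) : split (lshift n a) = inl a). Qed.

Lemma cat_ord_rshift (T : Type) m n (f : 'I_m -> T) (g : 'I_n -> T) b :
  cat_ord f g (rshift m b) = g b.
Proof. by rewrite /cat_ord (unsplitK (inr _ b) : split (rshift m b) = inr b). Qed.

Lemma sum_mul_delta (K : pzRingType) n (r : 'I_n -> K) l :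
  \sum_k r k * (k == l)%:R = r l.
Proof.
by rewrite (bigD1 l) //= eqxx mulr1 big1 ?addr0 // => k /negbTE ->; rewrite mulr0.
Qed.

(** * Submodules and dual systems *)

Section Modules.
Variables (K : pzRingType) (V : lmodType K).
Implicit Types (S T U : V -> Prop).

Definition pack_linear (W : zmodType) (s : GRing.Scale.law K W) (f : V -> W)
  (f_lin : linear_for s f) : {linear V -> W | s} :=
  HB.pack f (GRing.isLinear.Build K V W s f f_lin).

Lemma submod_of_comb U :
  U 0 -> (forall a u v, U u -> U v -> U (a *: u + v)) -> submod U.
Proof.
move=> U0 Ucomb; split=> //; split=> [u v Uu Uv|a u Uu].
  by rewrite -[u]scale1r; apply: Ucomb.
by rewrite -[a *: u]addr0; apply: Ucomb.
Qed.

Lemma submodB U x y : submod U -> U x -> U y -> U (x - y).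
Proof. by move=> [_ [UD UZ]] Ux Uy; rewrite -scaleN1r; apply: UD (UZ _ _ Uy). Qed.

Lemma submod_sum U n (r : 'I_n -> K) (x : 'I_n -> V) :
  submod U -> (forall k, U (x k)) -> U (\sum_k r k *: x k).
Proof. by move=> [U0 [UD UZ]] Ux; apply: (big_ind U) => // k _; apply: UZ. Qed.

Lemma submod_preim (W : lmodType K) (f : {linear V -> W}) (P : W -> Prop) :
  submod P -> submod (fun v => P (f v)).
Proof.
move=> [P0 [PD PZ]]; apply: submod_of_comb => [|a u v Pu Pv]; first by rewrite linear0.
by rewrite linearP; apply: PD (PZ _ _ Pu) Pv.
Qed.

Lemma submodI_ker U (f : {scalar V}) : submod U -> submod (fun v => U v /\ f v = 0).
Proof.
move=> [U0 [UD UZ]]; apply: submod_of_comb => [|a u v [Uu fu] [Uv fv]].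
  by rewrite linear0.
by split; [apply: UD (UZ _ _ Uu) Uv | rewrite scalarP fu fv mulr0 addr0].
Qed.

Lemma sum_scale_delta n (x : 'I_n -> V) l : \sum_k (k == l)%:R *: x k = x l.
Proof.
by rewrite (bigD1 l) //= eqxx scale1r big1 ?addr0 // => k /negbTE ->; rewrite scale0r.
Qed.

Lemma span_submod n (x : 'I_n -> V) :
  submod (fun v => exists r : 'I_n -> K, v = \sum_k r k *: x k).
Proof.
apply: submod_of_comb => [|a _ _ [r ->] [r' ->]].
  by exists (fun=> 0); rewrite big1 // => k _; rewrite scale0r.
exists (fun k => a * r k + r' k); rewrite scaler_sumr -big_split.
by apply: eq_bigr => k _; rewrite scalerDl scalerA.
Qed.

Lemma gen_sub_self S v : S v -> gen_sub S v.
Proof. by exists 1%N, (fun=> 1), (fun=> v); rewrite big_ord1 scale1r. Qed.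

Lemma gen_sub_min S U :
  submod U -> (forall v, S v -> U v) -> forall v, gen_sub S v -> U v.
Proof. by move=> hU SU _ [n [r [x [Sx ->]]]]; apply: submod_sum => // k; apply: SU. Qed.

Lemma gen_sub_submod S : submod (gen_sub S).
Proof.
apply: submod_of_comb => [|a _ _ [n1 [r1 [x1 [Sx1 ->]]]] [n2 [r2 [x2 [Sx2 ->]]]]].
  by exists 0%N, (fun=> 0), (fun=> 0); split; [case | rewrite big_ord0].
exists (n1 + n2)%N, (cat_ord (fun k => a * r1 k) r2), (cat_ord x1 x2); split.
  by move=> k; rewrite /cat_ord; case: split.
rewrite big_split_ord scaler_sumr; congr (_ + _); apply: eq_bigr => k _.
  by rewrite !cat_ord_lshift scalerA.
by rewrite !cat_ord_rshift.
Qed.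

Lemma gen_sub_span n (x : 'I_n -> V) v :
  gen_sub (fun y => exists k, y = x k) v -> exists r : 'I_n -> K, v = \sum_k r k *: x k.
Proof.
apply: (gen_sub_min (span_submod x)) => _ [k ->].
by exists (fun l => (l == k)%:R); rewrite sum_scale_delta.
Qed.

Definition biorthogonal n (g : 'I_n -> V) (th : 'I_n -> {scalar V}) : Prop :=
  forall k l, th k (g l) = (k == l)%:R.

Definition dual_system T n : Prop :=
  exists (g : 'I_n -> V) (th : 'I_n -> {scalar V}), (forall k, T (g k)) /\ biorthogonal g th.

Lemma dual_system0 T : dual_system T 0.
Proof. by exists (fun=> 0), (fun=> \0); split=> -[]. Qed.

Lemma dual_system_sub T1 T2 n :
  (forall v, T1 v -> T2 v) -> dual_system T1 n -> dual_system T2 n.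
Proof. by move=> T12 [g [th [T1g gth]]]; exists g, th; split=> // k; apply/T12/T1g. Qed.

Lemma dual_system_le T m n : (m <= n)%N -> dual_system T n -> dual_system T m.
Proof.
move=> le_mn [g [th [Tg gth]]].
by exists (fun k => g (widen_ord le_mn k)), (fun k => th (widen_ord le_mn k)); split.
Qed.

Lemma biorthogonal_coord n (g : 'I_n -> V) th (r : 'I_n -> K) k :
  biorthogonal g th -> th k (\sum_l r l *: g l) = r k.
Proof.
move=> gth; rewrite linear_sum -[RHS](sum_mul_delta r k); apply: eq_bigr => l _.
by rewrite scalarZ gth eq_sym.
Qed.

Lemma biorthogonal_cat m n (g1 : 'I_m -> V) th1 (g2 : 'I_n -> V) th2 :
  biorthogonal g1 th1 -> biorthogonal g2 th2 ->
  (forall k l, th1 k (g2 l) = 0) -> (forall k l, th2 k (g1 l) = 0) ->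
  biorthogonal (cat_ord g1 g2) (cat_ord th1 th2).
Proof.
move=> g1th1 g2th2 th1g2 th2g1 k l; rewrite /cat_ord -[k == l](inj_eq val_inj) /=.
case: splitP => a ->; case: splitP => b ->.
- exact: g1th1.
- by rewrite th1g2 ltn_eqF // ltn_addr.
- by rewrite th2g1 gtn_eqF // ltn_addr.
- by rewrite g2th2 eqn_add2l.
Qed.

Lemma free_summand_coords G H n : free_of_rank G n -> internal_dsum G H ->
  exists (b : 'I_n -> V) (c : 'I_n -> {scalar V}),
    [/\ forall k, G (b k), biorthogonal b c, forall k v, H v -> c k v = 0
       & forall v, H (v - \sum_k c k v *: b k)].
Proof.
move=> [_ [b [Gb [b_indep b_span]]]] [hG [hH [GH0 GH]]].
have coord_ex v : exists r : 'I_n -> K, H (v - \sum_k r k *: b k).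
  have [g [h [Gg [Hh ->]]]] := GH v.
  by have [r ->] := b_span g Gg; exists r; rewrite addrC addKr.
have coord_uniq v r r' :
    H (v - \sum_k r k *: b k) -> H (v - \sum_k r' k *: b k) -> r =1 r'.
  move=> Hr Hr' k; apply/eqP; rewrite -subr_eq0; apply/eqP; move: k; apply: b_indep.
  apply: GH0; first exact: submod_sum.
  have -> : \sum_k (r k - r' k) *: b k =
      (v - \sum_k r' k *: b k) - (v - \sum_k r k *: b k).
    rewrite opprB addrC addrA subrK -sumrB.
    by apply: eq_bigr => k _; rewrite scalerBl.
  exact: submodB.
have [coord coordP] := choice coord_ex.
have coord_scalar k : scalar (fun v => coord v k).
  move=> a u v.
  apply: (coord_uniq _ (coord _) (fun l => a * coord u l + coord v l)) => //.
  have -> : \sum_l (a * coord u l + coord v l) *: b l =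
      a *: \sum_l coord u l *: b l + \sum_l coord v l *: b l.
    by rewrite scaler_sumr -big_split; apply: eq_bigr => l _; rewrite scalerDl scalerA.
  rewrite opprD addrACA -scalerBr.
  by case: hH => _ [HD HZ]; apply: HD (HZ _ _ (coordP u)) (coordP v).
exists b, (fun k => pack_linear (coord_scalar k)); split=> //= [k l|k v Hv].
  apply: (coord_uniq _ (coord _) (fun k => (k == l)%:R)) => //.
  by rewrite sum_scale_delta subrr; case: hH.
apply: (coord_uniq _ (coord _) (fun=> 0)) => //.
by rewrite big1 ?subr0 // => l _; rewrite scale0r.
Qed.

Lemma delta_prop_dual T n : submod T -> delta_prop T n <-> dual_system T n.
Proof.
move=> hT; split=> [[G [hG [GT [H dsum]]]] | [g [th [Tg gth]]]].
  have [b [c [Gb bc _ _]]] := free_summand_coords hG dsum.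
  by exists b, c; split=> // k; apply/GT/Gb.
have th_span r k : th k (\sum_l r l *: g l) = r k := biorthogonal_coord r k gth.
exists (fun v => exists r : 'I_n -> K, v = \sum_k r k *: g k).
split; [split; first exact: span_submod | split].
- exists g; split; first by move=> k; exists (fun l => (l == k)%:R); rewrite sum_scale_delta.
  by split=> // r r0 k; rewrite -(th_span r k) r0 linear0.
- by move=> _ [r ->]; apply: submod_sum.
exists (fun v => forall k, th k v = 0); split; first exact: span_submod.
split.
  apply: submod_of_comb => [k|a u v thu thv k]; first exact: linear0.
  by rewrite scalarP thu thv mulr0 addr0.
split=> [_ [r ->] th0|v].
  by apply: big1 => k _; rewrite -(th_span r k) th0 scale0r.
exists (\sum_k th k v *: g k), (v - \sum_k th k v *: g k).
split; first by exists (fun k => th k v).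
split=> [k|]; last by rewrite addrC subrK.
by rewrite linearB /= th_span subrr.
Qed.

Lemma free_summand_proj (V' : lmodType K) (F : V -> Prop) (j : {linear V' -> V}) i :
  injective j -> free_of_rank F i -> internal_dsum F (fun v => exists v', v = j v') ->
  exists (b : 'I_i -> V) (c : 'I_i -> {scalar V}) (q : {linear V -> V'}),
    [/\ forall k, F (b k), biorthogonal b c, forall v', q (j v') = v'
       & forall v, j (q v) = v - \sum_k c k v *: b k].
Proof.
move=> j_inj hF dsum.
have [b [c [Fb bc c_j dec]]] := free_summand_coords hF dsum.
have [q qE] := choice dec.
have q_lin : linear q.
  move=> a u v; apply: j_inj; rewrite linearP -!qE.
  under eq_bigr => k _ do rewrite scalarP scalerDl -scalerA.
  by rewrite big_split /= -scaler_sumr scalerBr opprD addrACA.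
exists b, c, (pack_linear q_lin); split=> //= v'.
apply: j_inj; rewrite -qE big1 ?subr0 // => k _.
by rewrite c_j ?scale0r //; exists v'.
Qed.

End Modules.

Section SubsetProjection.
Variables (K : pzRingType) (V V' : lmodType K) (S F : V -> Prop) (S' : V' -> Prop).
Variables (j : {linear V' -> V}) (q : {linear V -> V'}).
Hypothesis S'E : forall v', S' v' <-> exists s f, S s /\ F f /\ s = f + j v'.

Lemma gen_sub_map_proj :
  (forall v, F (v - j (q v))) -> forall v, gen_sub S v -> gen_sub S' (q v).
Proof.
move=> Fq; apply: (gen_sub_min (submod_preim q (gen_sub_submod S'))) => s Ss.
apply/gen_sub_self/S'E; exists s, (s - j (q s)); split=> //; split=> //.
by rewrite subrK.
Qed.

Lemma gen_sub_map_incl :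
  (forall v, F v -> gen_sub S v) -> forall v', gen_sub S' v' -> gen_sub S (j v').
Proof.
move=> FS; apply: (gen_sub_min (submod_preim j (gen_sub_submod S))).
move=> v' /S'E [s [f [Ss [Ff sE]]]]; have -> : j v' = s - f by rewrite sE addrC addKr.
exact: submodB (gen_sub_submod S) (gen_sub_self Ss) (FS f Ff).
Qed.

End SubsetProjection.

(** * Local rings and the exchange lemma *)

Definition is_unit (K : comPzRingType) (x : K) : Prop := exists y, x * y = 1.

Definition local_ring (K : comPzRingType) : Prop :=
  exists J : K -> Prop,
    [/\ ideal J, forall x, ~ is_unit x -> J x & forall x, J x -> is_unit (1 - x)].

Lemma local_unit_1B_sum (K : comPzRingType) n (a c : 'I_n -> K) :
  local_ring K -> (forall k, ~ is_unit (a k)) -> is_unit (1 - \sum_k a k * c k).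
Proof.
move=> [J [[J0 [JD JM]] J_nonunit J_1B]] a_nonunit; apply: J_1B.
by apply: (big_ind J) => // k _; rewrite mulrC; apply/JM/J_nonunit.
Qed.

Section Exchange.
Variables (K : comPzRingType) (V : lmodType K).

Fact scale_form_subproof (c : K) (f : {scalar V}) : scalar (fun v => c * f v).
Proof. by move=> a u v; rewrite scalarP mulrDr mulrCA. Qed.

Definition scale_form c f : {scalar V} := pack_linear (scale_form_subproof c f).

Fact sum_form_subproof n (c : 'I_n -> K) (f : 'I_n -> {scalar V}) :
  scalar (fun v => \sum_k c k * f k v).
Proof.
move=> a u v; rewrite mulr_sumr -big_split; apply: eq_bigr => k _.
by rewrite scalarP mulrDr mulrCA.
Qed.

Definition sum_form n c f : {scalar V} := pack_linear (@sum_form_subproof n c f).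

Hypothesis K_local : local_ring K.

(* Projecting the g_l along e into ker chi turns their Gram matrix with the
   th k into I - a c^T, where a_k = th k e and c_l = chi (g l).  If some a_l0
   is a unit, drop l0 and correct the other forms by multiples of th l0;
   otherwise 1 - c.a is a unit and (I - a c^T)^-1 = I + a c^T / (1 - c.a). *)
Section Step.
Variables (U : V -> Prop) (e : V) (chi : {scalar V}) (n : nat).
Variables (g : 'I_n -> V) (th : 'I_n -> {scalar V}).
Hypotheses (U_sub : submod U) (Ue : U e) (chi_e : chi e = 1).
Hypotheses (Ug : forall k, U (g k)) (gth : biorthogonal g th).

Let pr v := v - chi v *: e.

Let pr_ker l : U (pr (g l)) /\ chi (pr (g l)) = 0.
Proof.
split; first by case: U_sub => _ [_ UZ]; apply: submodB => //; apply: UZ.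
by rewrite linearB linearZ /= chi_e mulr1 subrr.
Qed.

Let th_pr k l : th k (pr (g l)) = (k == l)%:R - chi (g l) * th k e.
Proof. by rewrite linearB linearZ /= gth. Qed.

Lemma exchange_unit_coord l0 :
  is_unit (th l0 e) -> dual_system (fun v => U v /\ chi v = 0) n.-1.
Proof.
move=> [t a0t].
exists (fun k => pr (g (lift l0 k))),
  (fun k => th (lift l0 k) \+ scale_form (- (th (lift l0 k) e * t)) (th l0)).
split=> [k|k m]; first exact: pr_ker.
rewrite /= !th_pr (inj_eq lift_inj) (negbTE (neq_lift l0 m)) sub0r.
set a := th (lift l0 k) e; set c := chi (g (lift l0 m)).
have -> : - (a * t) * - (c * th l0 e) = c * a * (th l0 e * t) by ring.
by rewrite a0t mulr1 subrK.
Qed.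

Lemma exchange_nonunit_coords :
  (forall l, ~ is_unit (th l e)) -> dual_system (fun v => U v /\ chi v = 0) n.
Proof.
move=> nonunit.
have [u su] := local_unit_1B_sum (fun l => chi (g l)) K_local nonunit.
set s := \sum_l th l e * chi (g l) in su.
exists (fun k => pr (g k)),
  (fun k => th k \+ scale_form (th k e * u) (sum_form (fun l => chi (g l)) th)).
split=> [k|k m /=]; first exact: pr_ker.
have -> : \sum_l chi (g l) * th l (pr (g m)) = chi (g m) * (1 - s).
  under eq_bigr => l _ do rewrite th_pr mulrBr.
  rewrite sumrB sum_mul_delta mulrBr mulr1 /s mulr_sumr; congr (_ - _).
  by apply: eq_bigr => l _; ring.
rewrite th_pr; set a := th k e; set c := chi (g m).
have -> : a * u * (c * (1 - s)) = c * a * ((1 - s) * u) by ring.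
by rewrite su mulr1 subrK.
Qed.

End Step.

Lemma dual_system_exchange1 (U : V -> Prop) e (chi : {scalar V}) n :
  submod U -> U e -> chi e = 1 -> dual_system U n ->
  dual_system (fun v => U v /\ chi v = 0) n.-1.
Proof.
move=> U_sub Ue chi_e [g [th [Ug gth]]].
have [[l0 unit_l0] | nonunit] := classic (exists l, is_unit (th l e)).
  exact: (exchange_unit_coord U_sub Ue chi_e Ug gth unit_l0).
apply: dual_system_le (leq_pred n) _.
apply: exchange_nonunit_coords U_sub Ue chi_e Ug gth _ => l unit_l.
by apply: nonunit; exists l.
Qed.

Lemma dual_system_exchange (U : V -> Prop) i (e : 'I_i -> V) (chi : 'I_i -> {scalar V}) n :
  submod U -> (forall k, U (e k)) -> biorthogonal e chi -> dual_system U n ->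
  dual_system (fun v => U v /\ forall k, chi k v = 0) (n - i).
Proof.
elim: i U e chi n => [|i IH] U e chi n U_sub Ue chi_e DU.
  by rewrite subn0; apply: dual_system_sub DU => v Uv; split=> // -[].
have chi0_e : chi ord0 (e ord0) = 1 by rewrite chi_e eqxx.
have D1 := dual_system_exchange1 U_sub (Ue ord0) chi0_e DU.
have U1e k : U (e (lift ord0 k)) /\ chi ord0 (e (lift ord0 k)) = 0.
  by rewrite chi_e (negbTE (neq_lift _ _)).
have chi1_e : biorthogonal (fun k => e (lift ord0 k)) (fun k => chi (lift ord0 k)).
  by move=> k l; rewrite chi_e (inj_eq lift_inj).
have := IH _ _ _ _ (submodI_ker (chi ord0) U_sub) U1e chi1_e D1.
rewrite subnS -subn1 subnAC subn1; apply: dual_system_sub => v [[Uv chi0v] chi1v].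
by split=> // k; case: (unliftP ord0 k) => [k' ->|->].
Qed.

End Exchange.

Section SplitOff.
Variables (K : comPzRingType) (V W : lmodType K) (i : nat).
Variables (e : 'I_i -> V) (chi : 'I_i -> {scalar V}).
Variables (jp : {linear W -> V}) (qp : {linear V -> W}).
Hypotheses (chi_e : biorthogonal e chi) (qp_jp : forall w, qp (jp w) = w).
Hypothesis jp_qp : forall v, jp (qp v) = v - \sum_k chi k v *: e k.
Variables (T : V -> Prop) (T' : W -> Prop).
Hypotheses (T_e : forall k, T (e k)) (T_qp : forall v, T v -> T' (qp v)).
Hypothesis T'_jp : forall w, T' w -> T (jp w).

Let chi_jp k w : chi k (jp w) = 0.
Proof.
have : \sum_l chi l (jp w) *: e l = 0.
  by move/eqP: (jp_qp (jp w)); rewrite qp_jp -subr_eq0 opprB addrC subrK => /eqP.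
by move/(congr1 (chi k)); rewrite biorthogonal_coord // linear0.
Qed.

Let qp_e k : qp (e k) = 0.
Proof.
rewrite -[qp (e k)]qp_jp jp_qp.
under eq_bigr => l _ do rewrite chi_e.
by rewrite sum_scale_delta subrr !linear0.
Qed.

Lemma dual_system_split_add n : dual_system T' n -> dual_system T (i + n).
Proof.
move=> [g [th [T'g gth]]].
exists (cat_ord e (fun l => jp (g l))), (cat_ord chi (fun k => th k \o qp)); split.
  by move=> k; rewrite /cat_ord; case: split => l; [apply: T_e | apply/T'_jp/T'g].
apply: biorthogonal_cat => // k l /=; first by rewrite qp_jp gth.
by rewrite qp_e linear0.
Qed.

Lemma dual_system_split_sub n :
  local_ring K -> submod T -> dual_system T n -> dual_system T' (n - i).
Proof.
move=> K_local T_sub DT.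
have [g [th [Tg gth]]] := dual_system_exchange K_local T_sub T_e chi_e DT.
exists (fun l => qp (g l)), (fun k => th k \o jp); split=> [l|k l /=].
  exact/T_qp/(Tg l).1.
rewrite jp_qp big1 ?subr0 => [|m _]; first exact: gth.
by rewrite (Tg l).2 scale0r.
Qed.

End SplitOff.

(** * Localization *)

Section NonzeroRing.
Variables (K : comPzRingType) (K_nz : (1 : K) != 0).

Definition nonzero_ring : Type := K.
HB.instance Definition _ := GRing.ComPzRing.on nonzero_ring.
HB.instance Definition _ := GRing.PzSemiRing_isNonZero.Build nonzero_ring K_nz.

Lemma mulmx1_min_nz m n (A : 'M[K]_(m, n)) B : A *m B = 1%:M -> (m <= n)%N.
Proof. exact: (@mulmx1_min nonzero_ring). Qed.

End NonzeroRing.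

Lemma dual_system_bounded (K : comPzRingType) (V : lmodType K) :
  (1 : K) != 0 -> fin_gen V ->
  exists B, forall (T : V -> Prop) n, dual_system T n -> (n <= B)%N.
Proof.
move=> K_nz [B [x xgen]]; exists B => T n [g [th [_ gth]]].
have [A gA] := choice (fun l => gen_sub_span (xgen (g l))).
apply: (mulmx1_min_nz K_nz (A := \matrix_(l, k) A l k) (B := \matrix_(k, l) th l (x k))).
apply/matrixP => l m; rewrite !mxE eq_sym -gth gA linear_sum.
by apply: eq_bigr => k _; rewrite !mxE scalarZ.
Qed.

Section Localization.
Variables (R : comPzRingType) (p : R -> Prop) (Rp : comPzRingType).
Variable phi : {rmorphism R -> Rp}.
Hypotheses (p_prime : prime_ideal p) (phi_loc : is_loc_ring p phi).

Let p1 : ~ p 1. Proof. by case: p_prime => _ []. Qed.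

Let p_mul s s' : ~ p s -> ~ p s' -> ~ p (s * s').
Proof. by case: p_prime => _ [_ pM] ns ns' /pM []. Qed.

Let denomM s t s' t' :
  phi s * t = 1 -> phi s' * t' = 1 -> phi (s * s') * (t * t') = 1.
Proof. by move=> st st'; rewrite rmorphM mulrACA st st' mulr1. Qed.

Lemma loc_ring_nontrivial : (1 : Rp) != 0.
Proof.
apply/eqP => Rp0; have [_ [_ phi_ker]] := phi_loc.
have := phi_ker 1; rewrite rmorph1 => /(_ Rp0) [u [pu u0]].
by case: p_prime => [[p0 _] _]; apply: pu; rewrite -(mulr1 u) u0.
Qed.

Section LocModule.
Variables (N : lmodType R) (Np : lmodType Rp) (iota : N -> Np).
Hypothesis iota_loc : is_loc_mod p phi iota.

Lemma iota_semilinear : linear_for (phi \; *:%R) iota.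
Proof. by case: iota_loc => iD [iZ _] a u v; rewrite iD iZ. Qed.

Let iotaD : {morph iota : x y / x + y}. Proof. by case: iota_loc. Qed.
Let iotaZ r x : iota (r *: x) = phi r *: iota x. Proof. by case: iota_loc => _ []. Qed.

Lemma iota0 : iota 0 = 0.
Proof. by rewrite -(scale0r (0 : N)) iotaZ rmorph0 scale0r. Qed.

Lemma iotaB : {morph iota : x y / x - y}.
Proof. by move=> x y; rewrite iotaD -scaleN1r iotaZ rmorphN1 scaleN1r. Qed.

Lemma iota_sum n (r : 'I_n -> R) (x : 'I_n -> N) :
  iota (\sum_k r k *: x k) = \sum_k phi (r k) *: iota (x k).
Proof. by rewrite (big_morph iota iotaD iota0); apply: eq_bigr => k _; apply: iotaZ. Qed.

(* a z + w for a = phi a / s0, z = x1 / s1 and w = x2 / s2, over the common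
   denominator s0 s1 s2. *)
Lemma loc_frac_comb (W : lmodType Rp) (kap : N -> W) a s0 t0 x1 s1 t1 x2 s2 t2 :
  linear_for (phi \; *:%R) kap ->
  phi s0 * t0 = 1 -> phi s1 * t1 = 1 -> phi s2 * t2 = 1 ->
  (phi a * t0) *: (t1 *: kap x1) + t2 *: kap x2 =
    (t0 * t1 * t2) *: kap ((s2 * a) *: x1 + (s0 * s1) *: x2).
Proof.
move=> kap_lin st0 st1 st2; have [kapZ _] := GRing.semilinear_linear kap_lin.
rewrite kap_lin kapZ /= !rmorphM scalerDr !scalerA; congr (_ *: _ + _ *: _).
  by transitivity (phi a * t0 * t1 * (phi s2 * t2)); [rewrite st2 mulr1 | ring].
by transitivity (t2 * (phi s0 * t0) * (phi s1 * t1)); [rewrite st0 st1 !mulr1 | ring].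
Qed.

Lemma loc_frac_eq (W : lmodType Rp) (kap : N -> W) x s t x' s' t' :
  linear_for (phi \; *:%R) kap -> ~ p s -> phi s * t = 1 -> ~ p s' -> phi s' * t' = 1 ->
  t *: iota x = t' *: iota x' -> t *: kap x = t' *: kap x'.
Proof.
move=> kap_lin ns st ns' st' xx'.
have [kapZ kapD] := GRing.semilinear_linear kap_lin.
have kapB := GRing.zmod_morphism_linear kap_lin.
have kap0 : kap 0 = 0 by rewrite -(scale0r (0 : N)) kapZ /= rmorph0 scale0r.
have [_ [_ [_ iota_ker]]] := iota_loc; have [phi_inv _] := phi_loc.
have : iota (s' *: x - s *: x') = 0.
  rewrite iotaB !iotaZ.
  have -> : phi s' *: iota x = (phi s * phi s') *: (t *: iota x).
    by rewrite scalerA mulrAC st mul1r.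
  have -> : phi s *: iota x' = (phi s * phi s') *: (t' *: iota x').
    by rewrite scalerA -mulrA st' mulr1.
  by rewrite xx' subrr.
move=> /iota_ker [u [nu ux]]; have [w uw] := phi_inv u nu.
have : phi s' *: kap x - phi s *: kap x' = 0.
  have := congr1 (fun v => w *: kap v) ux.
  by rewrite /= kapZ /= kapB !kapZ /= scalerA mulrC uw scale1r kap0 scaler0.
move/eqP; rewrite subr_eq0 => /eqP kap_xx'.
transitivity ((t * t') *: (phi s' *: kap x)).
  by rewrite scalerA -mulrA [t' * _]mulrC st' mulr1.
rewrite kap_xx' scalerA; have -> : t * t' * phi s = t' * (phi s * t) by ring.
by rewrite st mulr1.
Qed.

Lemma loc_lift (W : lmodType Rp) (kap : N -> W) :
  linear_for (phi \; *:%R) kap -> exists H : {linear Np -> W}, forall x, H (iota x) = kap x.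
Proof.
move=> kap_lin; have [_ [_ [iota_surj _]]] := iota_loc; have [_ [phi_surj _]] := phi_loc.
have H_ex z : exists w,
    forall x s t, ~ p s -> phi s * t = 1 -> z = t *: iota x -> w = t *: kap x.
  have [x0 [s0 [t0 [ns0 [st0 ->]]]]] := iota_surj z.
  exists (t0 *: kap x0) => x s t ns st; exact: loc_frac_eq kap_lin ns0 st0 ns st.
have [H HE] := choice H_ex.
have H_frac x s t : ~ p s -> phi s * t = 1 -> H (t *: iota x) = t *: kap x.
  by move=> ns st; apply: HE ns st _.
have H_lin : linear H.
  move=> a z w; have [a0 [s0 [t0 [ns0 [st0 ->]]]]] := phi_surj a.
  have [x1 [s1 [t1 [ns1 [st1 ->]]]]] := iota_surj z.
  have [x2 [s2 [t2 [ns2 [st2 ->]]]]] := iota_surj w.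
  have ns := p_mul (p_mul ns0 ns1) ns2; have st := denomM (denomM st0 st1) st2.
  rewrite (loc_frac_comb a0 x1 x2 iota_semilinear st0 st1 st2) (H_frac _ _ _ ns st).
  rewrite (H_frac _ _ _ ns1 st1) (H_frac _ _ _ ns2 st2).
  by rewrite (loc_frac_comb a0 x1 x2 kap_lin st0 st1 st2).
exists (pack_linear H_lin) => x /=.
by rewrite -[iota x]scale1r (H_frac _ _ _ p1) ?scale1r // rmorph1 mulr1.
Qed.

Lemma loc_sub_self (A : N -> Prop) x : A x -> loc_sub p phi iota A (iota x).
Proof. by move=> Ax; exists x, 1, 1; rewrite rmorph1 mulr1 scale1r. Qed.

Lemma loc_sub_submod (A : N -> Prop) : submod A -> submod (loc_sub p phi iota A).
Proof.
move=> [A0 [AD AZ]]; have [_ [phi_surj _]] := phi_loc.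
apply: submod_of_comb => [|a _ _ [x1 [s1 [t1 [Ax1 [ns1 [st1 ->]]]]]]
                               [x2 [s2 [t2 [Ax2 [ns2 [st2 ->]]]]]]].
  by rewrite -iota0; apply: loc_sub_self.
have [a0 [s0 [t0 [ns0 [st0 ->]]]]] := phi_surj a.
exists ((s2 * a0) *: x1 + (s0 * s1) *: x2), (s0 * s1 * s2), (t0 * t1 * t2).
split; first by apply: AD; apply: AZ.
split; first exact: p_mul (p_mul ns0 ns1) ns2.
split; first exact: denomM (denomM st0 st1) st2.
exact: loc_frac_comb iota_semilinear st0 st1 st2.
Qed.

Lemma loc_fin_gen : fin_gen N -> fin_gen Np.
Proof.
move=> [n [x xgen]]; exists n, (fun k => iota (x k)); move=> z.
have [_ [_ [iota_surj _]]] := iota_loc.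
have [m [s [t [_ [_ ->]]]]] := iota_surj z.
have [r ->] := gen_sub_span (xgen m).
exists n, (fun k => t * phi (r k)), (fun k => iota (x k)); split; first by move=> k; exists k.
by rewrite iota_sum scaler_sumr; apply: eq_bigr => k _; rewrite scalerA.
Qed.

Lemma loc_sub_map (N' : lmodType R) (N'p : lmodType Rp) (iota' : N' -> N'p)
    (f : N -> N') (fp : {linear Np -> N'p}) (A : N -> Prop) (A' : N' -> Prop) :
  (forall x, fp (iota x) = iota' (f x)) -> (forall x, A x -> A' (f x)) ->
  forall z, loc_sub p phi iota A z -> loc_sub p phi iota' A' (fp z).
Proof.
move=> fpE AA' _ [x [s [t [Ax [ns [st ->]]]]]].
by exists (f x), s, t; rewrite linearZ /= fpE; split; first exact: AA'.
Qed.

End LocModule.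

Lemma loc_ring_is_loc_mod : is_loc_mod p phi (phi : R^o -> Rp^o).
Proof.
have [_ [phi_surj phi_ker]] := phi_loc.
split; first exact: rmorphD.
split; first exact: rmorphM.
split=> [z|]; last exact: phi_ker.
have [a [s [t [ns [st ->]]]]] := phi_surj z.
by exists a, s, t; do 2!split=> //; exact: mulrC.
Qed.

Lemma loc_ring_local : local_ring Rp.
Proof.
have [phi_inv [phi_surj _]] := phi_loc.
(* The maximal ideal p R_p, as the localization of p in the regular module R. *)
exists (loc_sub p phi (phi : R^o -> Rp^o) p); split.
- exact: (loc_sub_submod loc_ring_is_loc_mod) p_prime.1.
- move=> z; have [a [s [t [ns [st ->]]]]] := phi_surj z => z_nonunit.
  exists a, s, t; split; last by do 2!split=> //; exact: mulrC.
  apply: NNPP => na; have [w aw] := phi_inv a na; apply: z_nonunit.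
  exists (phi s * w); transitivity ((phi s * t) * (phi a * w)); first by ring.
  by rewrite st aw mulr1.
- move=> _ [a [s [t [pa [ns [st ->]]]]]]; change (is_unit (1 - t * phi a)).
  have nsa : ~ p (s - a).
    case: p_prime => [[_ [pD _]] _] psa; apply: ns.
    by rewrite -(subrK a s); apply: pD.
  have [w w_inv] := phi_inv _ nsa; exists (phi s * w).
  transitivity ((phi s * t) * (phi (s - a) * w)); last by rewrite st w_inv mulr1.
  rewrite rmorphB; transitivity ((phi s * t - t * phi a) * (phi s * w)).
    by rewrite st.
  by ring.
Qed.

Lemma loc_split_maps (M M' : lmodType R) (Mp M'p : lmodType Rp)
    (iota : M -> Mp) (iota' : M' -> M'p) i (j : {linear M' -> M})
    (b : 'I_i -> M) (c : 'I_i -> {scalar M}) (q : {linear M -> M'}) :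
  is_loc_mod p phi iota -> is_loc_mod p phi iota' ->
  biorthogonal b c -> (forall x, q (j x) = x) ->
  (forall m, j (q m) = m - \sum_k c k m *: b k) ->
  exists (chi : 'I_i -> {scalar Mp}) (jp : {linear M'p -> Mp}) (qp : {linear Mp -> M'p}),
    [/\ biorthogonal (fun k => iota (b k)) chi, forall z, qp (jp z) = z,
        forall z, jp (qp z) = z - \sum_k chi k z *: iota (b k),
        forall x, jp (iota' x) = iota (j x) & forall m, qp (iota m) = iota' (q m)].
Proof.
move=> iota_loc iota'_loc bc qj jq.
have j_lin : linear_for (phi \; *:%R) (fun x => iota (j x)).
  by move=> a u v; rewrite /= linearP (iota_semilinear iota_loc).
have q_lin : linear_for (phi \; *:%R) (fun m => iota' (q m)).
  by move=> a u v; rewrite /= linearP (iota_semilinear iota'_loc).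
have c_lin k : linear_for (phi \; *:%R) (fun m => phi (c k m) : Rp^o).
  by move=> a u v; rewrite /= scalarP rmorphD rmorphM.
have [jp jpE] := loc_lift iota'_loc j_lin.
have [qp qpE] := loc_lift iota_loc q_lin.
have [H HE] := choice (fun k => loc_lift iota_loc (c_lin k)).
pose chi k : {scalar Mp} := pack_linear (linearP (H k)).
have chiE k m : chi k (iota m) = phi (c k m) := HE k m.
exists chi, jp, qp; split=> // [k l|z|z].
- by rewrite chiE bc rmorph_nat.
- have [_ [_ [iota'_surj _]]] := iota'_loc; have [x [s [t [_ [_ ->]]]]] := iota'_surj z.
  by rewrite !linearZ /= jpE qpE qj.
have [_ [_ [iota_surj _]]] := iota_loc; have [m [s [t [_ [_ ->]]]]] := iota_surj z.
rewrite !linearZ /= qpE jpE jq (iotaB iota_loc) (iota_sum iota_loc) scalerBr scaler_sumr.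
by congr (_ - _); apply: eq_bigr => k _; rewrite scalarZ chiE scalerA.
Qed.

End Localization.

Lemma ex_is_max (P : nat -> Prop) B :
  P 0%N -> (forall n, P n -> (n <= B)%N) -> exists d, is_max P d.
Proof.
move=> P0 P_le.
pose Pb n : bool := if excluded_middle_informative (P n) then true else false.
have PbP n : Pb n <-> P n by rewrite /Pb; case: excluded_middle_informative.
have Pb0 : exists n, Pb n by exists 0%N; apply/PbP.
have [d Pd d_max] := ex_maxnP Pb0 (fun n Pn => P_le n (proj1 (PbP n) Pn)).
by exists d; split=> [|n /PbP]; [apply/PbP | exact: d_max].
Qed.

Lemma is_max_shift (P P' : nat -> Prop) B i :
  P 0%N -> (forall n, P n -> (n <= B)%N) ->
  (forall n, P' n -> P (i + n)%N) -> (forall n, P n -> P' (n - i)%N) ->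
  exists d, is_max P d /\ is_max P' (d - i).
Proof.
move=> P0 P_le P'P PP'; have [d [Pd d_max]] := ex_is_max P0 P_le.
exists d; split=> //; split=> [|n /P'P /d_max]; [exact: PP' | lia].
Qed.

Unset Implicit Arguments. Set Strict Implicit.

Theorem lemma3p11
  (R : comPzRingType) (hR : noetherian R)
  (M : lmodType R) (hM : fin_gen M)
  (S : M -> Prop)
  (F : M -> Prop) (i : nat) (hF : free_of_rank F i)
  (hFS : forall v, F v -> gen_sub S v)
  (M' : lmodType R) (j : {linear M' -> M}) (hj : injective j)
  (hdsum : internal_dsum F (fun v => exists m', v = j m'))
  (S' : M' -> Prop)
  (hS' : forall m', S' m' <-> exists s f, S s /\ F f /\ s = f + j m')
  (p : R -> Prop) (hp : prime_ideal p)
  (Rp : comPzRingType) (phi : {rmorphism R -> Rp}) (hRp : is_loc_ring p phi)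
  (Mp : lmodType Rp) (iota : M -> Mp) (hMp : is_loc_mod p phi iota)
  (M'p : lmodType Rp) (iota' : M' -> M'p) (hM'p : is_loc_mod p phi iota') :
  exists d : nat,
    is_max (delta_prop (loc_sub p phi iota (gen_sub S))) d /\
    is_max (delta_prop (loc_sub p phi iota' (gen_sub S'))) (d - i)%N.
Proof.
have [b [c [q [Fb bc qj jq]]]] := free_summand_proj hj hF hdsum.
have [chi [jp [qp [chi_e qp_jp jp_qp jpE qpE]]]] :=
  loc_split_maps hp hRp hMp hM'p bc qj jq.
have Fq m : F (m - j (q m)) by rewrite jq opprB addrC subrK; apply: submod_sum hF.1 Fb.
pose T := loc_sub p phi iota (gen_sub S); pose T' := loc_sub p phi iota' (gen_sub S').
have T_sub : submod T := loc_sub_submod hp hRp hMp (gen_sub_submod S).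
have T'_sub : submod T' := loc_sub_submod hp hRp hM'p (gen_sub_submod S').
have T_e k : T (iota (b k)) := loc_sub_self phi hp iota (hFS _ (Fb k)).
have T_qp : forall z, T z -> T' (qp z) := loc_sub_map qpE (gen_sub_map_proj hS' Fq).
have T'_jp : forall z, T' z -> T (jp z) := loc_sub_map jpE (gen_sub_map_incl hS' hFS).
have [B bound] := dual_system_bounded (loc_ring_nontrivial hp hRp) (loc_fin_gen hMp hM).
apply: (is_max_shift (B := B)) => [|n|n|n].
- by apply/(delta_prop_dual _ T_sub)/dual_system0.
- by move/(delta_prop_dual _ T_sub)/bound.
- move/(delta_prop_dual _ T'_sub) => D; apply/(delta_prop_dual _ T_sub).
  exact: (dual_system_split_add chi_e qp_jp jp_qp T_e T'_jp D).
move/(delta_prop_dual _ T_sub) => D; apply/(delta_prop_dual _ T'_sub).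
exact: (dual_system_split_sub chi_e jp_qp T_e T_qp (loc_ring_local hp hRp) T_sub D).
Qed.
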